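(* Let $(L_i)_{i\in I}$ be a family of lattices with zero, pairwise intersecting in $\{0\}$, let $L=\coprod^0_{i\in I}L_i$ with each $L_i$ identified with its canonical copy in $L$, adjoin a new top element $\infty$ to $L$ and put $\overline{L}_i=L_i\cup\{\infty\}$. Let $\alpha_i\colon L\to L_i$, $x\mapsto x_{(i)}$ (the largest element of $L_i$ below $x$), and $\beta_i\colon L\to\overline{L}_i$, $x\mapsto x^{(i)}$ (the least element of $\overline{L}_i$ above $x$ in $L\cup\{\infty\}$); these exist for all $x$. Then, for each $i\in I$, the canonical embedding $L_i\hookrightarrow L$ is both lower bounded and upper bounded; in particular it is a nonempty-complete lattice homomorphism. Furthermore, $\alpha_i$ is meet-complete and $\beta_i$ is nonempty-join-complete.
   Context: $\coprod^0$ denotes the coproduct in the category of lattices with zero and zero-preserving homomorphisms. A map $f\colon K\to M$ between lattices (not necessarily complete) is meet-complete if for all $a\in K$ and $X\subseteq K$, $a=\bigwedge X$ in $K$ implies $f(a)=\bigwedge f[X]$ in $M$; nonempty-meet-complete if this is required only for nonempty $X$; join-completeness and nonempty-join-completeness are defined dually; $f$ is nonempty-complete if it is both nonempty-meet-complete and nonempty-join-complete. A homomorphism $f\colon K\to M$ is lower bounded if for each $y\in M$ the set $\{x\in K: y\le f(x)\}$ is empty or has a least element; upper bounded is defined dually. *)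

From HB Require Import structures.
From mathcomp Require Import all_boot all_order.
Set Implicit Arguments. Unset Strict Implicit. Unset Printing Implicit Defensive.
Import Order.TTheory.
Local Open Scope order_scope.

(* Lattices with zero are MathComp's [bLatticeType]s; zero = \bot. *)

Definition zlat_hom (d1 d2 : Order.disp_t) (A : bLatticeType d1) (B : bLatticeType d2)
  (f : A -> B) : Prop :=
  [/\ f \bot = \bot,
      (forall x y, f (x `&` y) = f x `&` f y) &
      (forall x y, f (x `|` y) = f x `|` f y)].

(** [L] together with the maps [e i : Li i -> L] is a coproduct of the family
    [Li] in the category of lattices with zero and zero-preserving homomorphisms
    (universal property). *)
Definition is_zcoproduct (I : Type) (dL : I -> Order.disp_t)
  (Li : forall i, bLatticeType (dL i)) (d : Order.disp_t) (L : bLatticeType d)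
  (e : forall i, Li i -> L) : Prop :=
  (forall i, zlat_hom (e i)) /\
  forall (dM : Order.disp_t) (M : bLatticeType dM) (f : forall i, Li i -> M),
    (forall i, zlat_hom (f i)) ->
    exists g : L -> M,
      [/\ zlat_hom g, (forall i x, g (e i x) = f i x) &
          (forall g' : L -> M, zlat_hom g' -> (forall i x, g' (e i x) = f i x) ->
             forall y, g' y = g y)].

Definition is_lub (T : Type) (le : T -> T -> bool) (X : T -> Prop) (a : T) : Prop :=
  (forall x, X x -> le x a) /\ (forall b, (forall x, X x -> le x b) -> le a b).
Definition is_glb (T : Type) (le : T -> T -> bool) (X : T -> Prop) (a : T) : Prop :=
  is_lub (fun x y => le y x) X a.

Definition fimage (A B : Type) (f : A -> B) (X : A -> Prop) : B -> Prop :=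
  fun y => exists2 x, X x & y = f x.

Definition meet_complete (A B : Type) (leA : A -> A -> bool) (leB : B -> B -> bool)
  (f : A -> B) : Prop :=
  forall (X : A -> Prop) a, is_glb leA X a -> is_glb leB (fimage f X) (f a).
Definition nonempty_meet_complete (A B : Type) (leA : A -> A -> bool) (leB : B -> B -> bool)
  (f : A -> B) : Prop :=
  forall (X : A -> Prop) a, (exists x, X x) -> is_glb leA X a -> is_glb leB (fimage f X) (f a).
Definition join_complete (A B : Type) (leA : A -> A -> bool) (leB : B -> B -> bool)
  (f : A -> B) : Prop :=
  forall (X : A -> Prop) a, is_lub leA X a -> is_lub leB (fimage f X) (f a).
Definition nonempty_join_complete (A B : Type) (leA : A -> A -> bool) (leB : B -> B -> bool)
  (f : A -> B) : Prop :=
  forall (X : A -> Prop) a, (exists x, X x) -> is_lub leA X a -> is_lub leB (fimage f X) (f a).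
Definition nonempty_complete (A B : Type) (leA : A -> A -> bool) (leB : B -> B -> bool)
  (f : A -> B) : Prop :=
  nonempty_meet_complete leA leB f /\ nonempty_join_complete leA leB f.

Definition lower_bounded (d1 d2 : Order.disp_t) (K : bLatticeType d1) (M : bLatticeType d2)
  (f : K -> M) : Prop :=
  forall y : M, (forall x, ~~ (y <= f x)) \/
                exists x0, y <= f x0 /\ forall x, y <= f x -> x0 <= x.
Definition upper_bounded (d1 d2 : Order.disp_t) (K : bLatticeType d1) (M : bLatticeType d2)
  (f : K -> M) : Prop :=
  forall y : M, (forall x, ~~ (f x <= y)) \/
                exists x0, f x0 <= y /\ forall x, f x <= y -> x <= x0.

(** Adjoining a new top element: [None] plays the role of infinity. *)
Definition le_inf (d : Order.disp_t) (T : porderType d) (a b : option T) : bool :=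
  match b, a with
  | None, _ => true
  | Some _, None => false
  | Some b', Some a' => a' <= b'
  end.
Definition omap_inf (A B : Type) (f : A -> B) (a : option A) : option B :=
  match a with None => None | Some x => Some (f x) end.

Definition is_alpha (d1 d2 : Order.disp_t) (Li : bLatticeType d1) (L : bLatticeType d2)
  (e : Li -> L) (alpha : L -> Li) : Prop :=
  forall x : L, e (alpha x) <= x /\ forall a : Li, e a <= x -> a <= alpha x.

Definition is_beta (d1 d2 : Order.disp_t) (Li : bLatticeType d1) (L : bLatticeType d2)
  (e : Li -> L) (beta : L -> option Li) : Prop :=
  forall x : L, le_inf (Some x) (omap_inf e (beta x)) /\
    forall b : option Li, le_inf (Some x) (omap_inf e b) -> le_inf (beta x) b.

From HB Require Import structures.
From mathcomp Require Import all_boot all_order.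
From mathcomp Require Import boolp.
Import Order.TTheory.
Local Open Scope order_scope.

(* The copies of the L_j generate L as a lattice with zero: the sublattice they
   generate satisfies the universal property too, so by uniqueness it is all of
   L.  Hence properties of elements of L can be proved by induction on lattice
   terms.  The retraction r : L -> L_i that kills every L_j with j <> i
   satisfies e_i (r x) <= x by such an induction, so r is alpha_i.  For beta_i,
   map L into the lattice obtained by adjoining a new zero to the product of the
   (L_k \ {0}) ∪ {∞}, sending b <> 0 in L_k to the family that is b at k and ∞
   elsewhere: by induction the k-th coordinate of the image of x lies above x,
   and by monotonicity it lies below every element of L_k above x.  Once alpha_i
   and beta_i exist, e_i is upper and lower bounded, and the completeness
   statements follow from the extremal properties defining alpha_i and beta_i. *)

Set Implicit Arguments.
Unset Strict Implicit.
Unset Printing Implicit Defensive.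

(* Lattices with zero given by a Prop-valued order, as needed for subtypes with
   a Prop predicate; [blattice_of] turns them into [bLatticeType]s classically. *)
Record blattice_axioms (T : Type) (le : T -> T -> Prop) (meet join : T -> T -> T)
    (bot : T) : Prop := {
  lax_refl : forall x, le x x;
  lax_anti : forall x y, le x y -> le y x -> x = y;
  lax_trans : forall x y z, le x y -> le y z -> le x z;
  lax_meet : forall x y z, le x (meet y z) <-> le x y /\ le x z;
  lax_join : forall x y z, le (join x y) z <-> le x z /\ le y z;
  lax_bot : forall x, le bot x }.

Definition blattice_of (T : Type) (le : T -> T -> Prop) (meet join : T -> T -> T)
  (bot : T) of blattice_axioms le meet join bot : Type := T.

Section BLatticeOf.
Variables (T : Type) (le : T -> T -> Prop) (meet join : T -> T -> T) (bot : T).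
Variable ax : blattice_axioms le meet join bot.

Definition blattice_le (x y : blattice_of ax) : bool := `[< le x y >].

Lemma blattice_le_refl : reflexive blattice_le.
Proof. by move=> x; apply/asboolP; apply: (lax_refl ax). Qed.

Lemma blattice_le_anti : antisymmetric blattice_le.
Proof. by move=> x y /andP[/asboolP xy /asboolP yx]; apply: (lax_anti ax). Qed.

Lemma blattice_le_trans : transitive blattice_le.
Proof. by move=> y x z /asboolP xy /asboolP yz; apply/asboolP; apply: (lax_trans ax) yz. Qed.

Lemma blattice_lexI (x y z : blattice_of ax) :
  blattice_le x (meet y z) = blattice_le x y && blattice_le x z.
Proof.
apply/asboolP/andP => [/(lax_meet ax)[xy xz]|[/asboolP xy /asboolP xz]].
  by split; apply/asboolP.
by apply/(lax_meet ax).
Qed.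

Lemma blattice_leUx (x y z : blattice_of ax) :
  blattice_le (join x y) z = blattice_le x z && blattice_le y z.
Proof.
apply/asboolP/andP => [/(lax_join ax)[xz yz]|[/asboolP xz /asboolP yz]].
  by split; apply/asboolP.
by apply/(lax_join ax).
Qed.

Lemma blattice_le0x (x : blattice_of ax) : blattice_le bot x.
Proof. by apply/asboolP; apply: (lax_bot ax). Qed.

End BLatticeOf.

HB.instance Definition _ T le meet join bot ax :=
  gen_eqMixin (@blattice_of T le meet join bot ax).
HB.instance Definition _ T le meet join bot ax :=
  gen_choiceMixin (@blattice_of T le meet join bot ax).
HB.instance Definition _ T le meet join bot ax :=
  Order.Le_isPOrder.Build (Order.Disp tt tt) (@blattice_of T le meet join bot ax)
    (@blattice_le_refl T le meet join bot ax) (@blattice_le_anti T le meet join bot ax)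
    (@blattice_le_trans T le meet join bot ax).
HB.instance Definition _ T le meet join bot ax :=
  Order.POrder_MeetJoin_isLattice.Build (Order.Disp tt tt)
    (@blattice_of T le meet join bot ax)
    (@blattice_lexI T le meet join bot ax) (@blattice_leUx T le meet join bot ax).
HB.instance Definition _ T le meet join bot ax :=
  Order.hasBottom.Build (Order.Disp tt tt) (@blattice_of T le meet join bot ax)
    (@blattice_le0x T le meet join bot ax).

Section BLatticeOfTheory.
Variables (T : Type) (le : T -> T -> Prop) (meet join : T -> T -> T) (bot : T).
Variable ax : blattice_axioms le meet join bot.
Implicit Types x y : blattice_of ax.

Lemma blattice_leP x y : reflect (le x y) (x <= y).
Proof. exact: asboolP. Qed.

Lemma blattice_meetE x y : x `&` y = meet x y.
Proof. by []. Qed.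

Lemma blattice_joinE x y : x `|` y = join x y.
Proof. by []. Qed.

End BLatticeOfTheory.

Lemma proj1_sig_inj (T : Type) (P : T -> Prop) (a b : {x | P x}) :
  proj1_sig a = proj1_sig b -> a = b.
Proof. by case: a b => [x px] [y py] /= xy; apply: eq_exist. Qed.

Lemma zlat_hom_mono d1 d2 (K : bLatticeType d1) (M : bLatticeType d2) (f : K -> M) :
  zlat_hom f -> {homo f : x y / x <= y}.
Proof. by case=> _ fI _ x y /meet_idPl xy; apply/meet_idPl; rewrite -fI xy. Qed.

Section InfAdjoined.
Variables (d : Order.disp_t) (K : bLatticeType d).
Implicit Types a b c : option K.

Definition meet_inf a b : option K :=
  match a, b with
  | None, _ => b
  | _, None => a
  | Some x, Some y => Some (x `&` y)
  end.

Definition join_inf a b : option K :=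
  match a, b with Some x, Some y => Some (x `|` y) | _, _ => None end.

Lemma le_inf_meet a b c : le_inf c (meet_inf a b) = le_inf c a && le_inf c b.
Proof. by case: a b c => [x|] [y|] [z|] //=; rewrite ?lexI ?andbT. Qed.

Lemma le_inf_join a b c : le_inf (join_inf a b) c = le_inf a c && le_inf b c.
Proof. by case: a b c => [x|] [y|] [z|] //=; rewrite ?leUx ?andbF. Qed.

Lemma le_inf_refl a : le_inf a a.
Proof. by case: a => /=. Qed.

Lemma le_inf_trans a b c : le_inf a b -> le_inf b c -> le_inf a c.
Proof. by case: a b c => [x|] [y|] [z|] //=; apply: le_trans. Qed.

Lemma le_inf_anti a b : le_inf a b -> le_inf b a -> a = b.
Proof. by case: a b => [x|] [y|] //= xy yx; congr Some; apply/le_anti; rewrite xy yx. Qed.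

Lemma le_inf0 a : le_inf a (Some \bot) -> a = Some \bot.
Proof. by case: a => [x|] //= x0; congr Some; apply/le_anti; rewrite x0 le0x. Qed.

Lemma join_inf_eq0 a b : join_inf a b = Some \bot -> a = Some \bot.
Proof.
case: a b => [x|] [y|] //= -[xy0]; congr Some.
by apply/le_anti; rewrite le0x -xy0 leUl.
Qed.

Variables (d' : Order.disp_t) (L : bLatticeType d') (e : K -> L).
Hypothesis e_hom : zlat_hom e.

Lemma le_inf_omap_meet (x y : L) a b :
  le_inf (Some x) (omap_inf e a) -> le_inf (Some y) (omap_inf e b) ->
  le_inf (Some (x `&` y)) (omap_inf e (meet_inf a b)).
Proof.
case: e_hom => _ eI _; case: a b => [u|] [v|] //= xu yv.
- by rewrite eI leI2.
- by rewrite (le_trans (leIl _ _) xu).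
- by rewrite (le_trans (leIr _ _) yv).
Qed.

Lemma le_inf_omap_join (x y : L) a b :
  le_inf (Some x) (omap_inf e a) -> le_inf (Some y) (omap_inf e b) ->
  le_inf (Some (x `|` y)) (omap_inf e (join_inf a b)).
Proof. by case: e_hom => _ _ eU; case: a b => [u|] [v|] //= xu yv; rewrite eU leU2. Qed.

End InfAdjoined.

Section Completeness.
Variables (d1 d2 : Order.disp_t) (K : bLatticeType d1) (L : bLatticeType d2).
Variable e : K -> L.
Hypothesis e_mono : {homo e : x y / x <= y}.

Lemma alpha_upper_bounded alpha : is_alpha e alpha -> upper_bounded e.
Proof. by move=> ha y; right; exists (alpha y); apply: ha. Qed.

Lemma beta_lower_bounded beta : is_beta e beta -> lower_bounded e.
Proof.
move=> hb y; have [ybeta beta_least] := hb y.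
case E: (beta y) ybeta => [a|] /= ya.
  by right; exists a; split=> // x yx; have := beta_least (Some x); rewrite E; apply.
by left=> x; apply/negP=> yx; have := beta_least (Some x); rewrite E => /(_ yx).
Qed.

Lemma bounded_nonempty_complete :
  lower_bounded e -> upper_bounded e -> nonempty_complete <=%O <=%O e.
Proof.
move=> e_lb e_ub; split=> X a [x0 Xx0] [aX a_glb]; split.
- by move=> _ [x Xx ->]; apply/e_mono/aX.
- move=> z zX; have [no_x|[x1 [zx1 x1_least]]] := e_lb z.
    by have := no_x x0; rewrite zX //; exists x0.
  by apply: le_trans zx1 (e_mono _); apply: a_glb => x Xx; apply/x1_least/zX; exists x.
- by move=> _ [x Xx ->]; apply/e_mono/aX.
- move=> z zX; have [no_x|[x1 [x1z x1_greatest]]] := e_ub z.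
    by have := no_x x0; rewrite zX //; exists x0.
  by apply: le_trans (e_mono _) x1z; apply: a_glb => x Xx; apply/x1_greatest/zX; exists x.
Qed.

Lemma alpha_meet_complete alpha : is_alpha e alpha -> meet_complete <=%O <=%O alpha.
Proof.
move=> ha; have alpha_mono x y : x <= y -> alpha x <= alpha y.
  by move=> xy; apply: (proj2 (ha y)); apply: le_trans (proj1 (ha x)) xy.
move=> X a [aX a_glb]; split; first by move=> _ [x Xx ->]; apply/alpha_mono/aX.
move=> c cX; apply: (proj2 (ha a)); apply: a_glb => x Xx.
by apply: le_trans (proj1 (ha x)); apply/e_mono/cX; exists x.
Qed.

Lemma beta_nonempty_join_complete beta :
  is_beta e beta -> nonempty_join_complete <=%O (@le_inf _ K) beta.
Proof.
move=> hb; have beta_mono x y : x <= y -> le_inf (beta x) (beta y).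
  move=> xy; apply: (proj2 (hb x)); have := proj1 (hb y).
  by case: (beta y) => [b|] //=; apply: le_trans xy.
move=> X a _ [Xa a_lub]; split; first by move=> _ [x Xx ->]; apply/beta_mono/Xa.
case=> [c|] Xc; last by case: (beta a).
apply: (proj2 (hb a)); apply: a_lub => x Xx /=.
have := Xc (beta x) (ex_intro2 _ _ x Xx erefl); have := proj1 (hb x).
by case: (beta x) => [b|] //= xb bc; apply: le_trans xb (e_mono bc).
Qed.

Lemma retraction_is_alpha r :
  {homo r : x y / x <= y} -> cancel e r -> (forall x, e (r x) <= x) -> is_alpha e r.
Proof. by move=> r_mono eK erx x; split=> // a eax; rewrite -(eK a) r_mono. Qed.

End Completeness.

Section ZCoproduct.
Unset Implicit Arguments.
Variables (I : Type) (dL : I -> Order.disp_t) (Li : forall i, bLatticeType (dL i)).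
Variables (d : Order.disp_t) (L : bLatticeType d) (e : forall i, Li i -> L).
Set Implicit Arguments.
Hypothesis coprod : is_zcoproduct e.

Let e_hom i : zlat_hom (e i) := proj1 coprod i.

Lemma zcoproduct_uniq dM (M : bLatticeType dM) (f : forall i, Li i -> M) (g1 g2 : L -> M) :
  (forall i, zlat_hom (f i)) ->
  zlat_hom g1 -> (forall i x, g1 (e i x) = f i x) ->
  zlat_hom g2 -> (forall i x, g2 (e i x) = f i x) -> g1 =1 g2.
Proof.
move=> f_hom g1_hom g1e g2_hom g2e y; have [g [_ _ g_uniq]] := proj2 coprod _ _ f f_hom.
by rewrite (g_uniq _ g1_hom g1e) (g_uniq _ g2_hom g2e).
Qed.

Section Induction.
Unset Implicit Arguments.
Variable P : L -> Prop.
Hypotheses (P0 : P \bot) (PI : forall x y, P x -> P y -> P (x `&` y))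
  (PU : forall x y, P x -> P y -> P (x `|` y)) (Pe : forall i a, P (e i a)).
Set Implicit Arguments.

Let S := {x : L | P x}.

Lemma sub_blattice_axioms :
  blattice_axioms (fun a b : S => proj1_sig a <= proj1_sig b)
    (fun a b => exist P _ (PI _ _ (proj2_sig a) (proj2_sig b)))
    (fun a b => exist P _ (PU _ _ (proj2_sig a) (proj2_sig b)))
    (exist P _ P0).
Proof.
split=> /=.
- by move=> x.
- by move=> x y xy yx; apply: proj1_sig_inj; apply/le_anti; rewrite xy yx.
- by move=> x y z; apply: le_trans.
- by move=> x y z; rewrite lexI; split=> [/andP|[-> ->]].
- by move=> x y z; rewrite leUx; split=> [/andP|[-> ->]].
- by move=> x; apply: le0x.
Qed.

Lemma zcoproduct_ind x : P x.
Proof.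
pose f i (a : Li i) : blattice_of sub_blattice_axioms := exist P (e i a) (Pe i a).
have f_hom i : zlat_hom (f i).
  by have [e0 eI eU] := e_hom i; split=> *; apply: proj1_sig_inj; rewrite /= ?e0 ?eI ?eU.
have [g [[g0 gI gU] ge _]] := proj2 coprod _ _ f f_hom.
pose h y := proj1_sig (g y : S).
have h_hom : zlat_hom h by split=> *; rewrite /h ?g0 ?gI ?gU.
have he i a : h (e i a) = e i a by rewrite /h ge.
have id_hom : zlat_hom (@id L) by [].
by rewrite -(zcoproduct_uniq e_hom h_hom he id_hom (fun _ _ => erefl) x); apply: proj2_sig.
Qed.

End Induction.

Section Alpha.
Variable i : I.

Definition retract_fun j (b : Li j) : Li i :=
  if pselect (j = i) is left ji then eq_rect j (fun k => Li k : Type) b i ji else \bot.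

Lemma retract_fun_hom j : zlat_hom (@retract_fun j).
Proof.
rewrite /zlat_hom /retract_fun; case: pselect => [ji|_]; first by subst.
by split=> *; rewrite ?meetxx ?joinxx.
Qed.

Lemma retract_fun_id b : retract_fun b = b.
Proof. by rewrite /retract_fun; case: pselect => [ii|//]; rewrite (Prop_irrelevance ii erefl). Qed.

Lemma exists_alpha : exists alpha, is_alpha (e i) alpha.
Proof.
have [r [r_hom re _]] := proj2 coprod _ _ _ retract_fun_hom.
have [r0 rI rU] := r_hom; have [e0 eI eU] := e_hom i.
exists r; apply: retraction_is_alpha (zlat_hom_mono r_hom) _ _.
  by move=> b; rewrite re retract_fun_id.
apply: zcoproduct_ind => [|x y xr yr|x y xr yr|j b].
- by rewrite r0 e0.
- by rewrite rI eI leI2.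
- by rewrite rU eU leU2.
- rewrite re /retract_fun; case: pselect => [ji|_]; first by subst.
  by rewrite e0 le0x.
Qed.

End Alpha.

Section Beta.

(* Elements of the product of the (L_k \ {0}) ∪ {∞}, with [None] as ∞; in
   [option nzfam] the outer [None] is the adjoined zero, onto which a meet with
   a vanishing coordinate collapses. *)
Definition nzfam := {t : forall k, option (Li k) | forall k, t k <> Some \bot}.

Definition fam_le (m n : option nzfam) : Prop :=
  match m, n with
  | None, _ => True
  | Some _, None => False
  | Some t, Some s => forall k, le_inf (proj1_sig t k) (proj1_sig s k)
  end.

Definition fam_meet (m n : option nzfam) : option nzfam :=
  match m, n with
  | Some t, Some s =>
    if pselect (forall k, meet_inf (proj1_sig t k) (proj1_sig s k) <> Some \bot)
      is left ts then Some (exist _ (fun k => meet_inf (proj1_sig t k) (proj1_sig s k)) ts)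
    else None
  | _, _ => None
  end.

Lemma join_nzfam_neq0 (t s : nzfam) k : join_inf (proj1_sig t k) (proj1_sig s k) <> Some \bot.
Proof. by move/join_inf_eq0; apply: (proj2_sig t). Qed.

Definition fam_join (m n : option nzfam) : option nzfam :=
  match m, n with
  | None, _ => n
  | _, None => m
  | Some t, Some s => Some (exist _ _ (@join_nzfam_neq0 t s))
  end.

Lemma fam_blattice_axioms : blattice_axioms fam_le fam_meet fam_join None.
Proof.
split.
- by case=> [t|] //= k; apply: le_inf_refl.
- case=> [t|] [s|] //= ts st; congr Some; apply: proj1_sig_inj.
  by apply: functional_extensionality_dep => k; apply: le_inf_anti.
- by case=> [t|] [s|] [u|] //= ts su k; apply: le_inf_trans (ts k) (su k).
- case=> [t|] [u|] [v|] /=; try by intuition.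
  case: pselect => [uv|uv0] /=.
    by split=> [tuv|[tu tv] k]; [split=> k; have := tuv k; rewrite le_inf_meet => /andP[]|
      rewrite le_inf_meet tu tv].
  split=> // -[tu tv]; apply: uv0 => k uv_k0; apply: (proj2_sig t k); apply: le_inf0.
  by rewrite -uv_k0 le_inf_meet tu tv.
- case=> [t|] [u|] [v|] /=; try by intuition.
  by split=> [tuv|[tv uv] k]; [split=> k; have := tuv k; rewrite le_inf_join => /andP[]|
    rewrite le_inf_join tv uv].
- by [].
Qed.

Definition famlat := blattice_of fam_blattice_axioms.

Definition coord k (m : famlat) : option (Li k) :=
  if m is Some t then proj1_sig t k else Some \bot.

Lemma coord_mono k (m n : famlat) : m <= n -> le_inf (coord k m) (coord k n).
Proof.
by case: m n => [t|] [s|] /blattice_leP //= _; case: (proj1_sig s k) => //= a; rewrite le0x.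
Qed.

Lemma coord_join k (m n : famlat) : coord k (m `|` n) = join_inf (coord k m) (coord k n).
Proof.
case: m n => [t|] [s|] //=; last by rewrite joinxx.
  by case: (proj1_sig t k) => //= a; rewrite joinx0.
by case: (proj1_sig s k) => //= a; rewrite join0x.
Qed.

Definition single k (b : Li k) m : option (Li m) :=
  if pselect (k = m) is left km then Some (eq_rect k (fun j => Li j : Type) b m km) else None.

Lemma single_id k (b : Li k) : single b k = Some b.
Proof. by rewrite /single; case: pselect => [kk|//]; rewrite (Prop_irrelevance kk erefl). Qed.

Lemma single_neq0 k (b : Li k) : b <> \bot -> forall m, single b m <> Some \bot.
Proof. by move=> b0 m; rewrite /single; case: pselect => [km|//]; subst => -[]. Qed.

Lemma single_meet k (a b : Li k) m : single (a `&` b) m = meet_inf (single a m) (single b m).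
Proof. by rewrite /single; case: pselect => [km|//]; subst. Qed.

Lemma single_join k (a b : Li k) m : single (a `|` b) m = join_inf (single a m) (single b m).
Proof. by rewrite /single; case: pselect => [km|//]; subst. Qed.

Definition fam_of k (b : Li k) : famlat :=
  if pselect (b = \bot) is right b0 then Some (exist _ (single b) (single_neq0 b0)) else None.

Lemma fam_of0 k : fam_of (\bot : Li k) = None.
Proof. by rewrite /fam_of; case: pselect. Qed.

Lemma fam_ofE k (b : Li k) (b0 : b <> \bot) :
  fam_of b = Some (exist _ (single b) (single_neq0 b0)).
Proof. by rewrite /fam_of; case: pselect => [//|b0']; congr Some; apply: proj1_sig_inj. Qed.

Lemma coord_fam_of k (b : Li k) : coord k (fam_of b) = Some b.
Proof. by have [->|b0] := pselect (b = \bot); rewrite ?fam_of0 ?fam_ofE //= single_id. Qed.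

Lemma fam_of_hom k : zlat_hom (@fam_of k).
Proof.
split; first exact: fam_of0.
- move=> a b; rewrite blattice_meetE.
  have [->|a0] := pselect (a = \bot); first by rewrite meet0x fam_of0.
  have [->|b0] := pselect (b = \bot); first by rewrite meetx0 fam_of0; case: (fam_of a).
  rewrite (fam_ofE a0) (fam_ofE b0) /=; case: pselect => [ab_neq0|ab_eq0].
    have [ab0|ab0] := pselect (a `&` b = \bot).
      by case: (ab_neq0 k); rewrite !single_id /= ab0.
    rewrite (fam_ofE ab0); congr Some; apply: proj1_sig_inj => /=.
    by apply: functional_extensionality_dep => m; rewrite single_meet.
  have [ab0|ab0] := pselect (a `&` b = \bot); first by rewrite ab0 fam_of0.
  by case: ab_eq0 => m; rewrite -single_meet; apply: single_neq0.
- move=> a b; rewrite blattice_joinE.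
  have [->|a0] := pselect (a = \bot); first by rewrite join0x fam_of0.
  have [->|b0] := pselect (b = \bot); first by rewrite joinx0 fam_of0; case: (fam_of a).
  have ab0 : a `|` b <> \bot by move=> ab0; apply: a0; apply/le_anti; rewrite le0x -ab0 leUl.
  rewrite (fam_ofE a0) (fam_ofE b0) (fam_ofE ab0) /=; congr Some; apply: proj1_sig_inj.
  by apply: functional_extensionality_dep => m; rewrite /= single_join.
Qed.

Definition coords_above (x : L) (m : famlat) : Prop :=
  forall k, le_inf (Some x) (omap_inf (e k) (coord k m)).

Lemma coords_above_meet x y m n :
  coords_above x m -> coords_above y n -> coords_above (x `&` y) (m `&` n).
Proof.
have e0 k : e k \bot = \bot by case: (e_hom k).
move=> xm yn k; rewrite blattice_meetE.
case: m n xm yn => [t|] [s|] xm yn /=; rewrite ?e0.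
- case: pselect => [ts|ts0]; first exact: (le_inf_omap_meet (e_hom k) (xm k) (yn k)).
  (* some coordinate of the meet vanishes, which forces x `&` y = 0 *)
  have [j /contrapT tsj0] := (existsNP _).2 ts0.
  have := le_inf_omap_meet (e_hom j) (xm j) (yn j); rewrite tsj0 /= e0 => xy0.
  by rewrite e0 (le_trans xy0) ?le0x.
- by have := yn k; rewrite /= e0 => y0; rewrite (le_trans (leIr _ _) y0).
- by have := xm k; rewrite /= e0 => x0; rewrite (le_trans (leIl _ _) x0).
- by have := xm k; rewrite /= e0 => x0; rewrite (le_trans (leIl _ _) x0).
Qed.

Lemma coords_above_join x y m n :
  coords_above x m -> coords_above y n -> coords_above (x `|` y) (m `|` n).
Proof. by move=> xm yn k; rewrite coord_join; apply: le_inf_omap_join. Qed.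

Lemma coords_above_fam_of k (b : Li k) : coords_above (e k b) (fam_of b).
Proof.
have [->|b0] := pselect (b = \bot).
  by rewrite fam_of0 => m /=; have [-> _ _] := e_hom k; have [-> _ _] := e_hom m.
rewrite (fam_ofE b0) => m /=; rewrite /single; case: pselect => [km|//]; subst.
exact: le_refl.
Qed.

Lemma exists_beta i : exists beta, is_beta (e i) beta.
Proof.
have [g [g_hom ge _]] := proj2 coprod _ _ _ fam_of_hom.
have [g0 gI gU] := g_hom.
have g_above x : coords_above x (g x).
  move: x; apply: zcoproduct_ind => [|x y xg yg|x y xg yg|j b].
  - by rewrite g0 => k /=; have [-> _ _] := e_hom k.
  - by rewrite gI; apply: coords_above_meet.
  - by rewrite gU; apply: coords_above_join.
  - by rewrite ge; apply: coords_above_fam_of.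
exists (fun x => coord i (g x)) => x; split; first exact: g_above.
case=> [c|] xc; last by case: (coord i (g x)).
by rewrite -(coord_fam_of c) -ge; apply/coord_mono/(zlat_hom_mono g_hom).
Qed.

End Beta.

End ZCoproduct.

Theorem corollary4p3 (I : Type) (dL : I -> Order.disp_t)
  (Li : forall i, bLatticeType (dL i)) (d : Order.disp_t) (L : bLatticeType d)
  (e : forall i, Li i -> L) :
  @is_zcoproduct I dL Li d L e ->
  forall i : I,
  [/\ lower_bounded (e i), upper_bounded (e i),
      nonempty_complete <=%O <=%O (e i),
      (exists alpha, is_alpha (e i) alpha) /\
        (forall alpha, is_alpha (e i) alpha -> meet_complete <=%O <=%O alpha) &
      (exists beta, is_beta (e i) beta) /\
        (forall beta, is_beta (e i) beta ->
           nonempty_join_complete <=%O (@le_inf _ (Li i)) beta)].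
Proof.
move=> coprod i; have e_mono := zlat_hom_mono (proj1 coprod i).
have [alpha ha] := exists_alpha coprod i.
have [beta hb] := exists_beta coprod i.
have e_lb := beta_lower_bounded hb; have e_ub := alpha_upper_bounded ha.
split=> //; first exact: bounded_nonempty_complete.
- by split; [exists alpha | move=> ?; apply: alpha_meet_complete].
- by split; [exists beta | move=> ?; apply: beta_nonempty_join_complete].
Qed.
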